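(* Let $G=(V,E,w_G)$ be a directed graph with non-negative integer edge weights, $n=|V|$, $s\in V$, and $1\le h\le n$ an integer. Let $C\subseteq V$ contain $s$ and, for every pair of nodes $u,v$ for which the shortest path from $u$ to $v$ in $G$ consists of exactly $\lceil h/2\rceil$ nodes, at least one node of one of these shortest paths. For each $x\in C$ let $\tilde d(x,\cdot)$ satisfy $\mathrm{dist}_G(x,v)\le \tilde d(x,v)\le 2\,\mathrm{dist}^h_G(x,v)$ for all $v\in V$. Let $H=(C,C^2,w_H)$ with $w_H(x,y)=\tilde d(x,y)$. Let $G'=(V,E\cup(\{s\}\times C),w_{G'})$ where $w_{G'}(u,v)=\mathrm{dist}_H(u,v)$ for $(u,v)\in(\{s\}\times C)\setminus E$, $w_{G'}(u,v)=2w_G(u,v)$ for $(u,v)\in E\setminus(\{s\}\times C)$, and $w_{G'}(u,v)=\min(\mathrm{dist}_H(u,v),2w_G(u,v))$ for $(u,v)\in E\cap(\{s\}\times C)$. Then for every node $v\in V$, $\mathrm{dist}^h_{G'}(s,v)=\mathrm{dist}_{G'}(s,v)$.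
   Context: For a weighted directed graph, $\mathrm{dist}(u,v)$ denotes the minimum weight of a directed path from $u$ to $v$. For an integer $h\ge1$, the $h$-hop distance $\mathrm{dist}^h(u,v)$ is the minimum weight among all directed paths from $u$ to $v$ with at most $h$ edges. *)

From mathcomp Require Import all_boot.
Set Implicit Arguments. Unset Strict Implicit. Unset Printing Implicit Defensive.

(* Extended naturals: [Some n] is the finite value n, [None] is +infinity. *)
Definition ext := option nat.

Definition eadd (a b : ext) : ext :=
  match a, b with Some x, Some y => Some (x + y) | _, _ => None end.

Definition ele (a b : ext) : bool :=
  match a, b with
  | _, None => true
  | None, Some _ => false
  | Some x, Some y => x <= y
  end.

Definition emin (a b : ext) : ext := if ele a b then a else b.

Definition edouble (a : ext) : ext :=
  match a with Some x => Some (2 * x) | None => None end.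

Section Graphs.
Variable V : finType.

(* p is (the sequence of vertices after u of) a directed simple path from u
   to v using edges of e; it has size p edges and size p + 1 nodes. *)
Definition is_path (e : rel V) (u v : V) (p : seq V) : bool :=
  [&& path e u p, last u p == v & uniq (u :: p)].

Definition pweight (w : V -> V -> ext) (u : V) (p : seq V) : ext :=
  \big[eadd/Some 0]_(xy <- zip (u :: p) p) w xy.1 xy.2.

Definition hdist (e : rel V) (w : V -> V -> ext) (h : nat) (u v : V) : ext :=
  \big[emin/None]_(k < h.+1)
     \big[emin/None]_(t : k.-tuple V | is_path e u v t) pweight w u t.

(* Distance: minimum weight of a directed path from u to v.  Every (simple)
   path has at most #|V| - 1 edges, so this ranges over all paths. *)
Definition dist (e : rel V) (w : V -> V -> ext) (u v : V) : ext :=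
  hdist e w #|V| u v.

Definition is_shortest (e : rel V) (w : V -> V -> ext) (u v : V) (p : seq V) :=
  is_path e u v p && (pweight w u p == dist e w u v).

End Graphs.

(* The graph H = (C, C^2, w_H) with w_H(x,y) = dt x y, as a graph on V whose
   edges are all pairs in C x C (paths in it stay inside C). *)
Definition H_edge (V : finType) (C : {set V}) : rel V :=
  fun x y => (x \in C) && (y \in C).

Definition G'_edge (V : finType) (E : rel V) (s : V) (C : {set V}) : rel V :=
  fun u v => E u v || ((u == s) && (v \in C)).

Definition G'_weight (V : finType) (E : rel V) (wG : V -> V -> nat) (s : V)
  (C : {set V}) (distH : V -> V -> ext) : V -> V -> ext :=
  fun u v =>
    if (u == s) && (v \in C) then
      (if E u v then emin (distH u v) (Some (2 * wG u v)) else distH u v)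
    else Some (2 * wG u v).

From mathcomp Require Import all_boot zify.
Set Implicit Arguments. Unset Strict Implicit. Unset Printing Implicit Defensive.

(* Past the edge leaving s, a simple path of G' uses only edges of G, with
   doubled weights; so it suffices to bound dist^h_G'(s,v) by
   dist_H(s,x) + 2 dist_G(x,v) for every x in C.  This goes by induction on
   the number of edges of a shortest x-v path Q of G.  If Q has fewer than
   ceil(h/2) edges, the edge (s,x) followed by Q is an h-hop path of G'.
   Otherwise the ceil(h/2) nodes of Q after x span a shortest path, which may
   be exchanged for an equally heavy shortest path through some y in C; then
   dist_H(s,y) <= dist_H(s,x) + dt(x,y) <= dist_H(s,x) + 2 dist^h_G(x,y), and
   the induction hypothesis at y, whose remaining shortest path is shorter,
   absorbs the prefix from x to y. *)

Lemma uphalf_le n : uphalf n <= n.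
Proof. by rewrite leq_uphalf_double -addnn leq_addr. Qed.

Lemma cons_cat_of_size (T : Type) n (s : seq T) : 0 < n <= size s ->
  exists x p q, s = x :: p ++ q /\ size (x :: p) = n.
Proof.
case/andP=> n_gt0 ns; have := size_takel ns.
case defp: (take n s) => [|x p] sp; first by move: n_gt0; rewrite -sp.
by exists x, p, (drop n s); split; rewrite // -cat_cons -defp cat_take_drop.
Qed.

Lemma eaddA a b c : eadd a (eadd b c) = eadd (eadd a b) c.
Proof. by case: a b c => [a|] [b|] [c|] //=; rewrite addnA. Qed.

Lemma add0e a : eadd (Some 0) a = a.
Proof. by case: a. Qed.

Lemma adde0 a : eadd a (Some 0) = a.
Proof. by case: a => //= a; rewrite addn0. Qed.

Lemma edoubleD a b : edouble (eadd a b) = eadd (edouble a) (edouble b).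
Proof. by case: a b => [a|] [b|] //=; rewrite mulnDr. Qed.

Lemma ele_refl a : ele a a.
Proof. by case: a => /=. Qed.

Lemma ele_None a : ele a None.
Proof. by case: a. Qed.

Lemma ele_trans a b c : ele a b -> ele b c -> ele a c.
Proof. by case: a b c => [a|] [b|] [c|] //=; exact: leq_trans. Qed.

Lemma ele_anti a b : ele a b -> ele b a -> a = b.
Proof. by case: a b => [a|] [b|] //= ab ba; congr Some; apply: anti_leq; rewrite ab. Qed.

Lemma ele_add a b c d : ele a b -> ele c d -> ele (eadd a c) (eadd b d).
Proof. by case: a b c d => [a|] [b|] [c|] [d|] //=; exact: leq_add. Qed.

Lemma ele_addl a b : ele b (eadd a b).
Proof. by case: a b => [a|] [b|] //=; exact: leq_addl. Qed.

Lemma ele_double a b : ele a b -> ele (edouble a) (edouble b).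
Proof. by case: a b => [a|] [b|] //= ab; rewrite leq_mul2l ab orbT. Qed.

Lemma ele_eminl a b : ele (emin a b) a.
Proof.
rewrite /emin; case: ifP => [_|]; first exact: ele_refl.
by case: a b => [a|] [b|] //= /negbT; rewrite -ltnNge => /ltnW.
Qed.

Lemma ele_eminr a b : ele (emin a b) b.
Proof. by rewrite /emin; case: ifP => // _; exact: ele_refl. Qed.

Lemma bigmin_le (I : eqType) (r : seq I) (P : pred I) (F : I -> ext) j :
  j \in r -> P j -> ele (\big[emin/None]_(i <- r | P i) F i) (F j).
Proof.
elim: r => // a r IH; rewrite inE big_cons => /orP [/eqP -> | jr] Pj.
  by rewrite Pj; exact: ele_eminl.
case: ifP => _; last exact: IH.
exact: ele_trans (ele_eminr _ _) (IH jr Pj).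
Qed.

Lemma bigmin_attained (I : Type) (r : seq I) (P : pred I) (F : I -> ext) :
  \big[emin/None]_(i <- r | P i) F i = None \/
  exists2 i, P i & \big[emin/None]_(i <- r | P i) F i = F i.
Proof.
elim: r => [|a r IH]; first by left; rewrite big_nil.
rewrite big_cons; case: ifP => Pa //.
by rewrite /emin; case: ifP => _; [right; exists a | exact: IH].
Qed.

Section Walks.
Variables (V : finType) (e : rel V) (w : V -> V -> ext).

Definition is_walk (u v : V) (p : seq V) : bool := path e u p && (last u p == v).

Lemma is_pathE u v p : is_path e u v p = is_walk u v p && uniq (u :: p).
Proof. by rewrite /is_path /is_walk andbA. Qed.

Lemma is_walk_cons u v a p : is_walk u v (a :: p) = e u a && is_walk a v p.
Proof. by rewrite /is_walk /= andbA. Qed.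

Lemma is_walk_cat u v p q :
  is_walk u v (p ++ q) = is_walk u (last u p) p && is_walk (last u p) v q.
Proof. by rewrite /is_walk cat_path last_cat eqxx andbT andbA. Qed.

Lemma pweight_nil u : pweight w u [::] = Some 0.
Proof. by rewrite /pweight big_nil. Qed.

Lemma pweight_cons u a p : pweight w u (a :: p) = eadd (w u a) (pweight w a p).
Proof. by rewrite /pweight big_cons. Qed.

Lemma pweight_cat u p q :
  pweight w u (p ++ q) = eadd (pweight w u p) (pweight w (last u p) q).
Proof.
elim: p u => [|a p IH] u /=; first by rewrite pweight_nil add0e.
by rewrite !pweight_cons IH eaddA.
Qed.

Lemma drop_loop u v r : path e u r -> last u r = v -> uniq r ->
  exists q, [/\ is_path e u v q, size q <= size r
              & ele (pweight w u q) (pweight w u r)].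
Proof.
have [/splitPr [r1 r2] | uNr] := boolP (u \in r); last first.
  move=> pr lr ur; exists r; split=> //; last exact: ele_refl.
  by rewrite /is_path /= pr lr eqxx uNr ur.
rewrite cat_path last_cat cat_uniq /= => /and3P[_ _ pr2] lr2 /and3P[_ _ /andP[uNr2 ur2]].
exists r2; split; first by rewrite /is_path pr2 lr2 eqxx /= uNr2 ur2.
  by rewrite size_cat /=; lia.
by rewrite pweight_cat pweight_cons eaddA; exact: ele_addl.
Qed.

Lemma shorten_walk u v p : is_walk u v p ->
  exists q, [/\ is_path e u v q, size q <= size p
              & ele (pweight w u q) (pweight w u p)].
Proof.
elim: p u => [|a p IH] u.
  by move=> wu; exists [::]; split; rewrite // ?is_pathE ?wu //; exact: ele_refl.
rewrite is_walk_cons => /andP[eua /IH[q [qP sq wq]]].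
case/and3P: (qP) => pq /eqP lq uq.
have pr : path e u (a :: q) by rewrite /= eua.
have [q' [q'P sq' wq']] := drop_loop pr lq uq.
exists q'; split=> //; first by rewrite (leq_trans sq') // ltnS.
by apply: ele_trans wq' _; rewrite !pweight_cons; exact: ele_add (ele_refl _) wq.
Qed.

Lemma uniq_size_le_card (u : V) p : uniq (u :: p) -> size p <= #|V|.
Proof.
move/card_uniqP => card_up; apply: ltnW.
by rewrite -/(size (u :: p)) -card_up; exact: max_card.
Qed.

Lemma hdist_le_path h u v p : is_path e u v p -> size p <= h ->
  ele (hdist e w h u v) (pweight w u p).
Proof.
move=> pP sp; rewrite /hdist.
apply: ele_trans (bigmin_le (P := xpredT) (fun k : 'I_h.+1 =>
  \big[emin/None]_(t : k.-tuple V | is_path e u v t) pweight w u t)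
  (mem_index_enum (Ordinal (sp : size p < h.+1))) isT) _.
exact: (bigmin_le (fun t : (size p).-tuple V => pweight w u t)
  (mem_index_enum (in_tuple p)) pP).
Qed.

Lemma hdist_attained h u v : hdist e w h u v = None \/
  exists p, [/\ is_path e u v p, size p <= h & hdist e w h u v = pweight w u p].
Proof.
rewrite /hdist.
have [->|[k _ ->]] := bigmin_attained (index_enum 'I_h.+1) xpredT
  (fun k : 'I_h.+1 => \big[emin/None]_(t : k.-tuple V | is_path e u v t) pweight w u t).
  by left.
have [->|[t tP ->]] := bigmin_attained (index_enum (k.-tuple V))
  (fun t : k.-tuple V => is_path e u v t) (fun t : k.-tuple V => pweight w u t).
  by left.
by right; exists t; split => //; rewrite size_tuple -ltnS.
Qed.

Lemma dist_attained u v : dist e w u v = None \/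
  exists2 p, is_path e u v p & dist e w u v = pweight w u p.
Proof.
rewrite /dist; case: (hdist_attained #|V| u v) => [|[p [pP _ ->]]]; first by left.
by right; exists p.
Qed.

Lemma hdist_le_walk h u v p : is_walk u v p -> size p <= h ->
  ele (hdist e w h u v) (pweight w u p).
Proof.
move=> /shorten_walk [q [qP sq wq]] sp.
exact: ele_trans (hdist_le_path qP (leq_trans sq sp)) wq.
Qed.

Lemma dist_le_path u v p : is_path e u v p -> ele (dist e w u v) (pweight w u p).
Proof. by move=> pP; apply: (hdist_le_path pP); case/and3P: pP => _ _ /uniq_size_le_card. Qed.

Lemma dist_le_walk u v p : is_walk u v p -> ele (dist e w u v) (pweight w u p).
Proof. by move=> /shorten_walk [q [qP _ wq]]; exact: ele_trans (dist_le_path qP) wq. Qed.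

Lemma dist_le_hdist h u v : ele (dist e w u v) (hdist e w h u v).
Proof.
case: (hdist_attained h u v) => [->|[p [pP _ ->]]]; first exact: ele_None.
exact: dist_le_path.
Qed.

Lemma dist_self_le u : ele (dist e w u u) (Some 0).
Proof. by rewrite -(pweight_nil u); apply: dist_le_path; rewrite /is_path /= eqxx. Qed.

Lemma dist_le_edge u x y : e x y -> ele (dist e w u y) (eadd (dist e w u x) (w x y)).
Proof.
move=> exy; case: (dist_attained u x) => [->|[p /and3P[pp /eqP lp _] ->]].
  exact: ele_None.
have /dist_le_walk : is_walk u y (rcons p y).
  by rewrite /is_walk rcons_path pp lp exy last_rcons eqxx.
by rewrite -cats1 pweight_cat lp pweight_cons pweight_nil adde0.
Qed.

End Walks.

Section NatWeights.
Variables (V : finType) (E : rel V) (wG : V -> V -> nat).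
Local Notation weG := (fun x y => Some (wG x y)).

Fixpoint nweight (u : V) (p : seq V) : nat :=
  if p is a :: p' then wG u a + nweight a p' else 0.

Lemma pweight_nat u p : pweight weG u p = Some (nweight u p).
Proof.
elim: p u => [|a p IH] u; first exact: pweight_nil.
by rewrite pweight_cons IH.
Qed.

Lemma nweight_cat u p q : nweight u (p ++ q) = nweight u p + nweight (last u p) q.
Proof. by elim: p u => [|a p IH] u //=; rewrite IH addnA. Qed.

Definition minimal_walk (x v : V) (p : seq V) : Prop :=
  is_walk E x v p /\ forall q, is_walk E x v q -> nweight x p <= nweight x q.

Lemma shortestP x v p :
  is_shortest E weG x v p <-> minimal_walk x v p /\ uniq (x :: p).
Proof.
rewrite /is_shortest is_pathE; split.
  case/andP => /andP[wp up] /eqP dp; split=> //; split=> // q /(dist_le_walk weG).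
  by rewrite -dp !pweight_nat.
case=> [[wp minp] up]; rewrite wp up /=; apply/eqP.
have := dist_le_walk weG wp; rewrite pweight_nat.
case: (dist_attained E weG x v) => [-> //|[q]].
rewrite is_pathE => /andP[wq _] ->; rewrite pweight_nat /= => qp.
by congr Some; apply: anti_leq; rewrite (minp q wq) qp.
Qed.

Lemma shortest_minimal x v p : is_shortest E weG x v p -> minimal_walk x v p.
Proof. by case/shortestP. Qed.

Lemma shortest_le_walk x v p q :
  is_shortest E weG x v p -> is_walk E x v q -> nweight x p <= nweight x q.
Proof. by move=> /shortest_minimal[_ minp]; exact: minp. Qed.

Lemma shortest_exists x v p : is_walk E x v p ->
  exists2 q, is_shortest E weG x v q & nweight x q <= nweight x p.
Proof.
move=> wp; have := dist_le_walk weG wp; rewrite pweight_nat.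
case: (dist_attained E weG x v) => [-> //|[q qP dq]].
by rewrite dq pweight_nat => qp; exists q; rewrite // /is_shortest qP dq eqxx.
Qed.

Lemma minimal_walk_catl x v p q :
  minimal_walk x v (p ++ q) -> minimal_walk x (last x p) p.
Proof.
case; rewrite is_walk_cat => /andP[wp wq] minpq; split=> // r wr.
have /eqP lr : last x r == last x p by case/andP: wr.
by have := minpq (r ++ q); rewrite is_walk_cat !nweight_cat lr wr wq leq_add2r; exact.
Qed.

Lemma minimal_walk_catr x v p q :
  minimal_walk x v (p ++ q) -> minimal_walk (last x p) v q.
Proof.
case; rewrite is_walk_cat => /andP[wp wq] minpq; split=> // r wr.
by have := minpq (p ++ r); rewrite is_walk_cat wp wr !nweight_cat leq_add2l; exact.
Qed.

Lemma minimal_walk_exchange x v p p' q : minimal_walk x v (p ++ q) ->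
  minimal_walk x (last x p) p' -> minimal_walk x v (p' ++ q).
Proof.
case; rewrite is_walk_cat => /andP[wp wq] minpq [wp' minp'].
have /eqP lp' : last x p' == last x p by case/andP: (wp').
split=> [|r wr]; first by rewrite is_walk_cat lp' wp' wq.
apply: leq_trans (minpq r wr); rewrite !nweight_cat lp' leq_add2r; exact: minp'.
Qed.

Lemma minimal_walk_shorten x v p : minimal_walk x v p ->
  exists2 q, is_shortest E weG x v q & size q <= size p.
Proof.
case=> wp minp; have [q [qP sq wq]] := shorten_walk weG wp.
exists q => //; apply/shortestP; move: qP; rewrite is_pathE => /andP[wq' uq].
split=> //; split=> // r wr; rewrite !pweight_nat /= in wq.
exact: leq_trans wq (minp r wr).
Qed.

End NatWeights.

Section ShortestPathsMeetC.
Variables (V : finType) (E : rel V) (wG : V -> V -> nat) (C : {set V}) (h : nat).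
Local Notation weG := (fun x y => Some (wG x y)).
Local Notation nw := (nweight wG).
Hypothesis h_gt0 : 0 < h.
Hypothesis C_meets_shortest : forall u v : V,
  (exists p, is_shortest E weG u v p /\ size (u :: p) = uphalf h) ->
  exists p, [/\ is_shortest E weG u v p, size (u :: p) = uphalf h
              & has (fun z => z \in C) (u :: p)].

Lemma shortest_meets_C x v Q : is_shortest E weG x v Q -> uphalf h <= size Q ->
  exists y P, [/\ y \in C, is_shortest E weG y v P, size P < size Q
    & ele (eadd (hdist E weG h x y) (Some (nw y P))) (Some (nw x Q))].
Proof.
move=> Qsh longQ.
have /cons_cat_of_size[q1 [A [B [defQ sA]]]] : 0 < uphalf h <= size Q.
  by rewrite uphalf_gt0 h_gt0.
subst Q; case/shortestP: Qsh => minQ uQ.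
have minAB : minimal_walk E wG q1 v (A ++ B) := minimal_walk_catr (p := [:: q1]) minQ.
have Ash : is_shortest E weG q1 (last q1 A) A.
  apply/shortestP; split; first exact: minimal_walk_catl minAB.
  by move: uQ; rewrite -cat_cons cons_uniq cat_uniq => /and4P[].
have [R [Rsh sR /hasP[y yR yC]]] := C_meets_shortest (ex_intro _ A (conj Ash sA)).
move: Rsh sR; case/splitPl: yR => R1 R2 ly Rsh sR.
have minRB := minimal_walk_exchange minAB (shortest_minimal Rsh).
have minR2B : minimal_walk E wG y v (R2 ++ B).
  by rewrite -ly; apply: minimal_walk_catr; rewrite catA.
have [P Psh sP] := minimal_walk_shorten minR2B.
exists y, P; split=> //.
  by move: sP sR sA; rewrite /= !size_cat; lia.
have wxy : is_walk E x y (q1 :: R1).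
  rewrite is_walk_cons; case/andP: minQ.1 => /andP[-> _] _ /=.
  by case: (shortest_minimal Rsh); rewrite is_walk_cat ly => /andP[].
apply: ele_trans (ele_add (hdist_le_walk weG wxy _) (ele_refl _)) _.
  by apply: leq_trans (uphalf_le h); rewrite -sR /= size_cat ltnS leq_addr.
rewrite pweight_nat /= -addnA leq_add2l.
apply: leq_trans (leq_add (leqnn _) (shortest_le_walk Psh minR2B.1)) _.
by rewrite -ly -nweight_cat catA; apply: minRB.2; exact: minAB.1.
Qed.

End ShortestPathsMeetC.

Section ReducedGraph.
Variables (V : finType) (E : rel V) (wG : V -> V -> nat) (s : V) (C : {set V})
  (dt : V -> V -> ext) (h : nat).
Local Notation weG := (fun x y => Some (wG x y)).
Local Notation nw := (nweight wG).
Local Notation distH := (dist (H_edge C) dt).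
Local Notation E' := (G'_edge E s C).
Local Notation w' := (G'_weight E wG s C distH).

Lemma G'_weight_le_E a b : E a b -> ele (w' a b) (Some (2 * wG a b)).
Proof.
move=> Eab; rewrite /G'_weight Eab; case: ifP => _; last exact: ele_refl.
exact: ele_eminr.
Qed.

Lemma G'_weight_le_H x : x \in C -> ele (w' s x) (distH s x).
Proof.
move=> xC; rewrite /G'_weight eqxx xC /=.
by case: (E s x); [exact: ele_eminl | exact: ele_refl].
Qed.

Lemma G'_weight_from_s a : E' s a ->
  (a \in C /\ w' s a = distH s a) \/ (E s a /\ w' s a = Some (2 * wG s a)).
Proof.
rewrite /G'_edge /G'_weight eqxx /=.
case: (a \in C); case: (E s a) => //= _; [|by left|by right].
by rewrite /emin; case: ifP => _; [left | right].
Qed.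

Lemma G'_walk_of_E x v p : is_walk E x v p ->
  is_walk E' x v p /\ ele (pweight w' x p) (Some (2 * nw x p)).
Proof.
elim: p x => [|a p IH] x; first by rewrite pweight_nil.
rewrite !is_walk_cons => /andP[Exa /IH[wp' le_p]].
rewrite /G'_edge {1}Exa wp' pweight_cons mulnDr; split=> //.
exact: ele_add (G'_weight_le_E Exa) le_p.
Qed.

Lemma G'_walk_avoiding_s u v p : s \notin u :: p -> is_walk E' u v p ->
  is_walk E u v p /\ pweight w' u p = Some (2 * nw u p).
Proof.
elim: p u => [|a p IH] u; first by rewrite pweight_nil.
rewrite inE negb_or is_walk_cons => /andP[us sNp] /andP[E'ua /(IH _ sNp)[wp pw]].
have /negbTE us' : u != s by rewrite eq_sym.
have Eua : E u a by move: E'ua; rewrite /G'_edge us' orbF.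
by rewrite is_walk_cons Eua wp pweight_cons pw /G'_weight us' /= mulnDr.
Qed.

Lemma hdist'_le_short_walk x v Q : x \in C -> is_walk E x v Q -> size Q < uphalf h ->
  ele (hdist E' w' h s v) (eadd (distH s x) (Some (2 * nw x Q))).
Proof.
move=> xC /G'_walk_of_E[wQ' le_Q] sQ.
have wxQ : is_walk E' s v (x :: Q) by rewrite is_walk_cons wQ' /G'_edge eqxx xC orbT.
apply: ele_trans (hdist_le_walk w' wxQ (leq_trans sQ (uphalf_le h))) _.
by rewrite pweight_cons; exact: ele_add (G'_weight_le_H xC) le_Q.
Qed.

Hypothesis h_gt0 : 0 < h.
Hypothesis C_meets_shortest : forall u v : V,
  (exists p, is_shortest E weG u v p /\ size (u :: p) = uphalf h) ->
  exists p, [/\ is_shortest E weG u v p, size (u :: p) = uphalf h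
              & has (fun z => z \in C) (u :: p)].
Hypothesis dt_le_hdist : forall x, x \in C -> forall v,
  ele (dt x v) (edouble (hdist E weG h x v)).

Lemma hdist'_le_shortest x v Q : x \in C -> is_shortest E weG x v Q ->
  ele (hdist E' w' h s v) (eadd (distH s x) (Some (2 * nw x Q))).
Proof.
have [n] := ubnP (size Q); elim: n x v Q => // n IH x v Q; rewrite ltnS => sQ xC Qsh.
have [short|long] := ltnP (size Q) (uphalf h).
  by apply: hdist'_le_short_walk xC _ short; case: (shortest_minimal Qsh).
have [y [P [yC Psh sP le_xyP]]] := shortest_meets_C h_gt0 C_meets_shortest Qsh long.
apply: ele_trans (IH y v P (leq_trans sP sQ) yC Psh) _.
have Hxy : H_edge C x y by rewrite /H_edge xC yC.
apply: ele_trans (ele_add (dist_le_edge dt s Hxy) (ele_refl _)) _.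
rewrite -eaddA; apply: ele_add (ele_refl _) _.
apply: ele_trans (ele_add (dt_le_hdist xC y) (ele_refl (edouble (Some (nw y P))))) _.
by rewrite -edoubleD; exact: ele_double le_xyP.
Qed.

Lemma hdist'_le_walk x v W : x \in C -> is_walk E x v W ->
  ele (hdist E' w' h s v) (eadd (distH s x) (Some (2 * nw x W))).
Proof.
move=> xC /(shortest_exists wG)[Q Qsh le_QW].
apply: ele_trans (hdist'_le_shortest xC Qsh) _.
by apply: ele_add (ele_refl _) _; rewrite /= leq_mul2l le_QW orbT.
Qed.

Hypothesis s_in_C : s \in C.

Lemma hdist'_eq_dist' v : hdist E' w' h s v = dist E' w' s v.
Proof.
apply: ele_anti; last exact: dist_le_hdist.
case: (dist_attained E' w' s v) => [->|[[|a P] PP ->]]; first exact: ele_None.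
  by apply: hdist_le_walk; first by rewrite is_pathE in PP; case/andP: PP.
move: PP; rewrite is_pathE is_walk_cons => /andP[/andP[E'sa wP] /andP[sNP _]].
have [wPE wtP] := G'_walk_avoiding_s sNP wP.
rewrite pweight_cons wtP; case: (G'_weight_from_s E'sa) => [[aC ->] | [Esa ->]].
  exact: hdist'_le_walk aC wPE.
have wsP : is_walk E s v (a :: P) by rewrite is_walk_cons Esa.
apply: ele_trans (hdist'_le_walk s_in_C wsP) _.
apply: ele_trans (ele_add (dist_self_le _ _ s) (ele_refl _)) _.
by rewrite add0e /= mulnDr.
Qed.

End ReducedGraph.

Theorem lemma3p3 (V : finType) (E : rel V) (wG : V -> V -> nat) (s : V)
  (h : nat) (C : {set V}) (dt : V -> V -> ext) :
  1 <= h <= #|V| ->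
  s \in C ->
  (forall u v : V,
     (exists p : seq V, is_shortest E (fun x y => Some (wG x y)) u v p
                        /\ size (u :: p) = uphalf h) ->
     exists p : seq V, [/\ is_shortest E (fun x y => Some (wG x y)) u v p,
                           size (u :: p) = uphalf h &
                           has (fun z => z \in C) (u :: p)]) ->
  (forall x, x \in C -> forall v : V,
     ele (dist E (fun x y => Some (wG x y)) x v) (dt x v) /\
     ele (dt x v) (edouble (hdist E (fun x y => Some (wG x y)) h x v))) ->
  let distH := dist (H_edge C) dt in
  let E' := G'_edge E s C in
  let w' := G'_weight E wG s C distH in
  forall v : V, hdist E' w' h s v = dist E' w' s v.
Proof.
move=> /andP[h_gt0 _] s_in_C C_meets_shortest dt_bounds distH E' w' v.
exact: hdist'_eq_dist' h_gt0 C_meets_shortest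
  (fun x xC y => (dt_bounds x xC y).2) s_in_C v.
Qed.
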